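(* Let $R$ be a commutative ring with identity, $\mathcal S$ an associative $R$-algebra with identity, $\mathcal M$ a $2$-torsion free bimodule over $\mathcal S$, $\delta$ a derivation on $\mathcal S$ and $f:\mathcal S\to\mathcal M$ a bimodule homomorphism over $\mathcal S$. If $D:\mathcal S\to\mathcal M$ is a Jordan $(\delta,f)$-derivation on $\mathcal M$ and $x,y\in\mathcal S$ satisfy $xy=yx$, then $D(xy)=D(x)y+f(x)\delta(y)$.
   Context: A derivation on $\mathcal S$ is an additive map $\delta$ with $\delta(ab)=\delta(a)b+a\delta(b)$. An additive map $D:\mathcal S\to\mathcal M$ is a Jordan $(\delta,f)$-derivation if $D(x^2)=D(x)x+f(x)\delta(x)$ for all $x\in\mathcal S$. $\mathcal M$ is $2$-torsion free if $2m=0$ implies $m=0$. *)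

From mathcomp Require Import all_boot all_order all_algebra.
Set Implicit Arguments. Unset Strict Implicit. Unset Printing Implicit Defensive.
Import GRing.Theory.
Local Open Scope ring_scope.

Definition is_bimodule (S : ringType) (M : zmodType)
  (l : S -> M -> M) (r : M -> S -> M) : Prop :=
  (forall a m n, l a (m + n) = l a m + l a n) /\
  (forall a b m, l (a + b) m = l a m + l b m) /\
  (forall m n a, r (m + n) a = r m a + r n a) /\
  (forall m a b, r m (a + b) = r m a + r m b) /\
  (forall a b m, l a (l b m) = l (a * b) m) /\
  (forall m a b, r (r m a) b = r m (a * b)) /\
  (forall a m b, l a (r m b) = r (l a m) b) /\
  (forall m, l 1 m = m) /\
  (forall m, r m 1 = m).

Definition two_torsion_free (M : zmodType) : Prop :=
  forall m : M, m *+ 2 = 0 -> m = 0.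

Definition additive_map (A B : zmodType) (h : A -> B) : Prop :=
  forall x y, h (x + y) = h x + h y.

Definition is_derivation (S : ringType) (d : S -> S) : Prop :=
  additive_map d /\ forall a b, d (a * b) = d a * b + a * d b.

Definition is_bimodule_hom (S : ringType) (M : zmodType)
  (l : S -> M -> M) (r : M -> S -> M) (f : S -> M) : Prop :=
  [/\ additive_map f,
      (forall a x, f (a * x) = l a (f x)) &
      (forall x b, f (x * b) = r (f x) b)].

Definition is_jordan_df_derivation (S : ringType) (M : zmodType)
  (l : S -> M -> M) (r : M -> S -> M) (d : S -> S) (f : S -> M) (D : S -> M) : Prop :=
  additive_map D /\ forall x, D (x * x) = r (D x) x + r (f x) (d x).

From mathcomp Require Import all_boot all_order all_algebra.
Local Open Scope ring_scope.
Import GRing.Theory.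

Set Implicit Arguments.
Unset Strict Implicit.
Unset Printing Implicit Defensive.

(** Since [S] has a
    unit, linearizing the Jordan identity at [x + 1] gives
    [D x = D(1) x + f(1) d(x)]; with [f(x) = f(1) x] and the Leibniz rule for
    [d], both sides of the claim then expand to
    [D(1) x y + f(1) d(x) y + f(1) x d(y)]. *)

Lemma derivation1 {S : nzRingType} {d : S -> S} : is_derivation d -> d 1 = 0.
Proof.
move=> [_ dM]; apply: (@addrI _ (d 1)).
by rewrite addr0 -[in RHS](mulr1 1) dM mulr1 mul1r.
Qed.

Section UnitalJordanDerivation.

Variables (S : nzRingType) (M : zmodType) (r : M -> S -> M).
Variables (d : S -> S) (f : S -> M) (D : S -> M).

Hypothesis rDl : forall m n a, r (m + n) a = r m a + r n a.
Hypothesis rDr : forall m a b, r m (a + b) = r m a + r m b.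
Hypothesis rA : forall m a b, r (r m a) b = r m (a * b).
Hypothesis r1 : forall m, r m 1 = m.

Hypothesis d_der : is_derivation d.
Hypothesis fD : additive_map f.
Hypothesis fr : forall x b, f (x * b) = r (f x) b.
Hypothesis DD : additive_map D.
Hypothesis DJ : forall x, D (x * x) = r (D x) x + r (f x) (d x).

Lemma jordan_df_derivation_unitE x : D x = r (D 1) x + r (f 1) (d x).
Proof.
have sqrD1 : (x + 1) * (x + 1) = x * x + x + x + 1.
  by rewrite mulrDl mulrDr mul1r mulr1 !addrA.
have := DJ (x + 1); case: d_der => dD _.
rewrite sqrD1 !DD DJ !fD dD (derivation1 d_der) addr0 !rDl !rDr !r1.
rewrite -!addrA => /addrI; rewrite addrCA => /addrI.
rewrite !(addrCA (r (D 1) x)) (addrCA (D 1)) => /addrI.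
by rewrite (addrC (D 1)) => /addIr.
Qed.

Lemma jordan_df_derivation_leibniz x y :
  D (x * y) = r (D x) y + r (f x) (d y).
Proof.
have fxE : f x = r (f 1) x by rewrite -fr mul1r.
case: d_der => _ dM.
rewrite (jordan_df_derivation_unitE (x * y)) (jordan_df_derivation_unitE x).
by rewrite fxE dM rDr rDl !rA addrA.
Qed.

End UnitalJordanDerivation.

Theorem lemma3p9 (R : comNzRingType) (S : algType R) (M : zmodType)
  (l : S -> M -> M) (r : M -> S -> M) (d : S -> S) (f : S -> M) (D : S -> M) :
  is_bimodule l r ->
  two_torsion_free M ->
  is_derivation d ->
  is_bimodule_hom l r f ->
  is_jordan_df_derivation l r d f D ->
  forall x y : S, x * y = y * x ->
  D (x * y) = r (D x) y + r (f x) (d y).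
Proof.
move=> [_ [_ [rDl [rDr [_ [rA [_ [_ r1]]]]]]]] _ d_der [fD _ fr] [DD DJ] x y _.
exact: jordan_df_derivation_leibniz rDl rDr rA r1 d_der fD fr DD DJ x y.
Qed.
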